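(* Let $C\subseteq\mathbb{F}_2^n$ be a code. Then: (1) $|C|\le 2^{\,n-\lceil 2\delta(C)/(\gamma+1)\rceil+1}$; (2) $|C|\le \dfrac{2^n}{\sum_{i=0}^t\binom ni}$, where $t$ is the largest integer with $t<\delta(C)/(\gamma+1)$; (3) if $d:=\lceil 2\delta(C)/(\gamma+1)\rceil$ satisfies $2d>n$, then $|C|\le\left\lfloor\frac{2d}{2d-n}\right\rfloor$.
   Context: Let $n\ge2$ and fix reals $0<p\le q<1/2$. Let $\gamma:=\log_{q/(1-p)}\left(\frac{p}{1-q}\right)$. For $a,b\in\{0,1\}$, $d_{ab}(y,x)=|\{i: y_i=a,\ x_i=b\}|$; discrepancy $\delta(y,x):=\gamma\,d_{10}(y,x)+d_{01}(y,x)$. A code is $C\subseteq\mathbb{F}_2^n$ with $|C|\ge2$, and $\delta(C)=\min\{\delta(x,x'):x,x'\in C,\ x\ne x'\}$. *)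

From HB Require Import structures.
From mathcomp Require Import all_boot all_order all_algebra.
From mathcomp Require Import all_classical all_reals all_analysis.
Set Implicit Arguments. Unset Strict Implicit. Unset Printing Implicit Defensive.
Import Order.TTheory GRing.Theory Num.Theory.
Local Open Scope ring_scope.

Notation word n := {ffun 'I_n -> bool}.

(* gamma = log_{q/(1-p)} (p/(1-q)) = ln (p/(1-q)) / ln (q/(1-p)) *)
Definition gammaZ (R : realType) (p q : R) : R :=
  ln (p / (1 - q)) / ln (q / (1 - p)).

Definition dab (n : nat) (a b : bool) (y x : word n) : nat :=
  #|[set i : 'I_n | (y i == a) && (x i == b)]|.

Definition disc (R : realType) (g : R) (n : nat) (y x : word n) : R :=
  g * (dab true false y x)%:R + (dab false true y x)%:R.

Definition is_min_disc (R : realType) (g : R) (n : nat) (C : {set word n}) (d : R) : Prop :=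
  (exists x y, [/\ x \in C, y \in C, x != y & disc g x y = d]) /\
  (forall x y, x \in C -> y \in C -> x != y -> d <= disc g x y).

From HB Require Import structures.
From mathcomp Require Import all_boot all_order all_algebra.
From mathcomp Require Import all_classical all_reals all_analysis.
From mathcomp Require Import lra zify.
Import Order.TTheory GRing.Theory Num.Theory.
Set Implicit Arguments. Unset Strict Implicit. Unset Printing Implicit Defensive.

(* The whole argument rests on one symmetrisation identity: for all words x, y,
     delta(x, y) + delta(y, x) = (gamma + 1) d_H(x, y),
   where d_H is the Hamming distance.  Since gamma > 0 whenever 0 < p <= q < 1/2,
   every pair of distinct codewords satisfies d_H(x, y) >= 2 delta(C) / (gamma + 1),
   so C is an ordinary binary code of minimum Hamming distance at least
   e := ceil (2 delta(C) / (gamma + 1)).  The three claims are then the three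
   classical bounds for such codes:
   (1) the Singleton bound, by puncturing e - 1 coordinates;
   (2) the Hamming (sphere-packing) bound, by disjointness of the radius-t balls
       around codewords whenever 2t < e;
   (3) the Plotkin bound, by double counting the sum of all pairwise distances. *)

Definition hamming (n : nat) (x y : word n) : nat := #|[set i | x i != y i]|.

Section HammingDistance.
Variable n : nat.
Implicit Types x y : word n.

Lemma card_set_indicator (P : pred 'I_n) : #|[set i | P i]| = (\sum_i P i)%N.
Proof.
by rewrite -sum1_card big_mkcond /=; apply: eq_bigr => i _; rewrite inE; case: (P i).
Qed.

Lemma hamming_sum x y : hamming x y = (\sum_i (x i != y i))%N.
Proof. exact: card_set_indicator. Qed.

Lemma hamming_dab x y : hamming x y = (dab true false x y + dab false true x y)%N.
Proof.
rewrite /hamming /dab !card_set_indicator -big_split /=; apply: eq_bigr => i _.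
by case: (x i); case: (y i).
Qed.

Lemma hamming_le x y : (hamming x y <= n)%N.
Proof. by rewrite /hamming -[X in (_ <= X)%N](card_ord n) max_card. Qed.

Lemma hamming_gt0 x y : x != y -> (0 < hamming x y)%N.
Proof.
move=> neq_xy; rewrite /hamming card_gt0; apply/set0Pn.
have [i neq_i] : exists i, x i != y i.
  apply/existsP; apply: contraR neq_xy; rewrite negb_exists => /forallP same.
  by apply/eqP/ffunP => i; apply/eqP; rewrite -[_ == _]negbK same.
by exists i; rewrite inE.
Qed.

End HammingDistance.

(* Number of subsets of coordinates of size at most t: the volume of a Hamming
   ball of radius t, in the form used by the theorem. *)
Lemma card_small_subsets (n t : nat) :
  #|[set A : {set 'I_n} | (#|A| <= t)%N]| = (\sum_(0 <= i < n.+1 | (i <= t)%N) 'C(n, i))%N.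
Proof.
have card_le_n (A : {set 'I_n}) : (#|A| <= n)%N.
  by rewrite -[X in (_ <= X)%N](card_ord n) max_card.
rewrite -sum1_card big_mkord.
rewrite (partition_big (fun A : {set 'I_n} => inord #|A| : 'I_n.+1)
                       (fun j : 'I_n.+1 => (j <= t)%N)); last first.
  by move=> A; rewrite inE inordK // ltnS.
apply: eq_bigr => j le_jt; transitivity 'C(#|'I_n|, j); last by rewrite card_ord.
rewrite -card_draws -sum1_card.
apply: eq_bigl => A; rewrite !inE; apply/idP/idP.
  by case/andP=> _ /eqP <-; rewrite inordK // ltnS.
move=> /eqP card_A; rewrite card_A le_jt; apply/eqP/val_inj.
by rewrite /= inordK // -card_A ltnS.
Qed.

Definition flip (n : nat) (x : word n) (A : {set 'I_n}) : word n :=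
  [ffun i => x i (+) (i \in A)].

(* In each coordinate, at most half of the ordered pairs of a code disagree:
   if a words have a 1 there and b have a 0, the count is 2ab <= (a + b)^2 / 2. *)
Lemma coordinate_disagreements (n : nat) (C : {set word n}) (i : 'I_n) :
  (2 * (\sum_(x in C) \sum_(y in C) (x i != y i)) <= #|C| * #|C|)%N.
Proof.
set a := (\sum_(y in C) y i)%N; set b := (\sum_(y in C) ~~ y i)%N.
have a_b : (a + b)%N = #|C|.
  by rewrite -big_split -sum1_card; apply: eq_bigr => y _; case: (y i).
have row (x : word n) : (\sum_(y in C) (x i != y i))%N = (x i * b + ~~ x i * a)%N.
  rewrite !big_distrr -big_split; apply: eq_bigr => y _.
  by case: (x i); case: (y i).
rewrite (eq_bigr _ (fun x _ => row x)) big_split -!big_distrl -/a -/b -a_b.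
have [AGM _] := nat_AGM2 a b; move: AGM => /=; rewrite expnS expn1; lia.
Qed.

Section ClassicalBounds.
Variables (n e : nat) (C : {set word n}).
Hypothesis min_dist : forall x y, x \in C -> y \in C -> x != y -> (e <= hamming x y)%N.

(* Forgetting the coordinates outside S is injective on C as soon as fewer than
   e coordinates are forgotten. *)
Lemma puncture_bound (S : {set 'I_n}) : (#|~: S| < e)%N -> (#|C| <= 2 ^ #|S|)%N.
Proof.
move=> small_compl; pose restrict (x : word n) := [set i in S | x i].
have restrict_inj : {in C &, injective restrict}.
  move=> x y xC yC same; apply/eqP; apply: contraTT small_compl => neq_xy.
  rewrite -leqNgt; apply: leq_trans (min_dist xC yC neq_xy) _.
  apply: subset_leq_card; apply/fintype.subsetP => i; rewrite !inE => neq_i.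
  apply: contra neq_i => iS; move/setP: same => /(_ i); rewrite !inE iS /=.
  by move->.
rewrite -(card_in_imset restrict_inj) -card_powerset; apply: subset_leq_card.
apply/fintype.subsetP => _ /imsetP[x _ ->]; rewrite powersetE; apply/fintype.subsetP => i.
by rewrite inE => /andP[].
Qed.

Lemma singleton_bound : (0 < e)%N -> (e <= n)%N -> (#|C| <= 2 ^ (n - e + 1))%N.
Proof.
move=> e_gt0 le_en; have le_kn : (n - e + 1 <= n)%N by lia.
pose S := [set widen_ord le_kn i | i in 'I_(n - e + 1)].
have card_S : #|S| = (n - e + 1)%N.
  by rewrite card_imset ?card_ord // => i j /(congr1 val) /= /val_inj.
rewrite -card_S; apply: puncture_bound.
by rewrite -(ltn_add2l (n - e + 1)) -card_S cardsC card_S card_ord; lia.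
Qed.

(* Hamming bound: if 2t < e, the radius-t balls around codewords are disjoint,
   so |C| times the ball volume is at most 2^n. *)
Lemma hamming_bound (t : nat) : (2 * t < e)%N ->
  (#|C| * \sum_(0 <= i < n.+1 | (i <= t)%N) 'C(n, i) <= 2 ^ n)%N.
Proof.
move=> lt_2t_e; rewrite -card_small_subsets -cardsX.
set Ball := [set A : {set 'I_n} | _].
have flip_inj : {in finset.setX C Ball &, injective (fun xA => flip xA.1 xA.2)}.
  move=> [x A] [y B]; rewrite !inE /= => /andP[xC At] /andP[yC Bt] /ffunP same.
  have flip_same i : x i (+) (i \in A) = y i (+) (i \in B).
    by move: (same i); rewrite !ffunE.
  have eq_xy : x = y.
    apply/eqP; apply: contraTT lt_2t_e => neq_xy; rewrite -leqNgt.
    apply: leq_trans (min_dist xC yC neq_xy) _.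
    have le_AB : (hamming x y <= #|A :|: B|)%N.
      apply: subset_leq_card; apply/fintype.subsetP => i; rewrite !inE => neq_i.
      by move: neq_i (flip_same i); case: (x i); case: (y i); case: (i \in A);
        case: (i \in B).
    apply: leq_trans le_AB (leq_trans (leq_card_setU A B) _).
    by rewrite mul2n -addnn leq_add.
  subst y; congr (_, _); apply/setP => i; move: (flip_same i).
  by case: (x i); case: (i \in A); case: (i \in B).
rewrite -(card_in_imset flip_inj); apply: leq_trans (max_card _) _.
by rewrite card_ffun card_bool card_ord.
Qed.

(* Each codeword is at distance at least e from the other |C| - 1 codewords. *)
Lemma row_distance_sum x : x \in C ->
  (#|C| * e <= e + \sum_(y in C) hamming x y)%N.
Proof.
move=> xC; rewrite -sum_nat_const (bigD1 x xC) [X in (_ <= _ + X)%N](bigD1 x xC) /=.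
apply: leq_add => //; apply: leq_trans (leq_addl _ _).
by apply: leq_sum => y /andP[yC neq_yx]; apply: min_dist; rewrite // eq_sym.
Qed.

(* Plotkin bound: |C| (2e - n) <= 2e, by comparing the two estimates of the sum
   of all pairwise distances. *)
Lemma plotkin_bound : (#|C| * (2 * e - n) <= 2 * e)%N.
Proof.
set S := (\sum_(x in C) \sum_(y in C) hamming x y)%N.
have lower : (#|C| * #|C| * e <= #|C| * e + S)%N.
  rewrite -mulnA -sum_nat_const.
  apply: (@leq_trans (\sum_(x in C) (e + \sum_(y in C) hamming x y))).
    by apply: leq_sum => x; apply: row_distance_sum.
  by rewrite big_split sum_nat_const.
have upper : (2 * S <= n * (#|C| * #|C|))%N.
  have -> : S = (\sum_i \sum_(x in C) \sum_(y in C) (x i != y i))%N.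
    rewrite exchange_big; apply: eq_bigr => x _.
    by rewrite exchange_big; apply: eq_bigr => y _; apply: hamming_sum.
  rewrite big_distrr /= -[X in (_ <= X * _)%N](card_ord n) -sum_nat_const.
  by apply: leq_sum => i _; apply: coordinate_disagreements.
nia.
Qed.

End ClassicalBounds.

Local Open Scope ring_scope.

Section Discrepancy.
Variables (R : realType) (g : R) (n : nat).
Implicit Types x y : word n.

Lemma dab_swap (a b : bool) x y : dab a b y x = dab b a x y.
Proof. by apply: eq_card => i; rewrite !inE andbC. Qed.

Lemma disc_sym x y : disc g x y + disc g y x = (g + 1) * (hamming x y)%:R.
Proof.
rewrite /disc (dab_swap true false x y) (dab_swap false true x y) hamming_dab natrD.
lra.
Qed.

Lemma disc_gt0 x y : 0 < g -> x != y -> 0 < disc g x y.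
Proof.
move=> g_gt0 /hamming_gt0; rewrite hamming_dab /disc.
case: (dab true false x y) => [|k] /= pos; first by rewrite mulr0 add0r ltr0n.
by rewrite ltr_wpDr // mulr_gt0 // ltr0n.
Qed.

Lemma min_disc_hamming (C : {set word n}) (dC : R) : 0 < g -> is_min_disc g C dC ->
  forall x y, x \in C -> y \in C -> x != y -> 2 * dC / (g + 1) <= (hamming x y)%:R.
Proof.
move=> g_gt0 [_ dC_min] x y xC yC neq_xy.
rewrite ler_pdivrMr; last by lra.
rewrite [X in _ <= X]mulrC -disc_sym.
by have := dC_min _ _ xC yC neq_xy; have := dC_min _ _ yC xC; rewrite eq_sym => /(_ neq_xy); lra.
Qed.

Lemma min_disc_gt0 (C : {set word n}) (dC : R) : 0 < g -> is_min_disc g C dC -> 0 < dC.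
Proof. by move=> g_gt0 [[x [y [_ _ neq_xy <-]]] _]; apply: disc_gt0. Qed.

End Discrepancy.

(* For 0 < p <= q < 1/2 both logarithms defining gamma are negative. *)
Lemma gamma_gt0 (R : realType) (p q : R) : 0 < p -> p <= q -> q < 1 / 2 -> 0 < gammaZ p q.
Proof.
move=> hp hpq hq; rewrite /gammaZ -divrNN.
apply: divr_gt0; rewrite oppr_gt0; apply: ln_lt0; apply/andP; split.
- by apply: divr_gt0 => //; lra.
- by rewrite ltr_pdivrMr; lra.
- by apply: divr_gt0; lra.
- by rewrite ltr_pdivrMr; lra.
Qed.

Section CastBounds.
Variables (R : realType) (n e : nat) (C : {set word n}).
Hypothesis min_dist : forall x y, x \in C -> y \in C -> x != y -> (e <= hamming x y)%N.

Lemma singleton_bound_real : (0 < e)%N -> (e <= n)%N ->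
  #|C|%:R <= (2 : R) ^ (n%:Z - e%:Z + 1).
Proof.
move=> e_gt0 le_en; have -> : n%:Z - e%:Z + 1 = (n - e + 1)%N%:Z by lia.
by rewrite -exprnP -natrX ler_nat singleton_bound.
Qed.

Lemma hamming_bound_real (t : int) : 0 <= t -> 2 * t < e%:Z ->
  #|C|%:R <= (2 : R) ^+ n / \sum_(0 <= i < n.+1 | (i%:Z <= t)) ('C(n, i))%:R.
Proof.
case: t => [t _ | //] lt_2t_e.
rewrite (eq_bigl (fun i => (i <= t)%N)) => [|i]; last by rewrite lez_nat.
have vol_gt0 : (0 < \sum_(0 <= i < n.+1 | (i <= t)%N) 'C(n, i))%N.
  rewrite -card_small_subsets card_gt0; apply/set0Pn.
  by exists finset.set0; rewrite inE cards0.
rewrite -natr_sum ler_pdivlMr ?ltr0n // -natrM -natrX ler_nat.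
by apply: (hamming_bound min_dist); lia.
Qed.

Lemma plotkin_bound_int : n%:Z < 2 * e%:Z ->
  #|C|%:Z <= Num.floor ((2 * e%:Z)%:~R / (2 * e%:Z - n%:Z)%:~R : R).
Proof.
move=> lt_n_2e; have := plotkin_bound min_dist.
rewrite floor_ge_int ler_pdivlMr ?ltr0z ?subr_gt0 // -intrM ler_int.
nia.
Qed.

End CastBounds.

Unset Implicit Arguments.
Theorem mainTheorem12 (R : realType) (n : nat) (p q : R)
  (hn : (2 <= n)%N) (hp : 0 < p) (hpq : p <= q) (hq : q < 1 / 2)
  (C : {set word n}) (hC : (2 <= #|C|)%N) (dC : R)
  (hdC : is_min_disc (gammaZ p q) C dC) :
  let g := gammaZ p q in
  [/\ (#|C|%:R <= (2 : R) ^ (n%:Z - Num.ceil (2 * dC / (g + 1)) + 1)),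
      (forall t : int, t%:~R < dC / (g + 1) ->
         (forall t' : int, t'%:~R < dC / (g + 1) -> t' <= t) ->
         #|C|%:R <= (2 : R) ^+ n / \sum_(0 <= i < n.+1 | (i%:Z <= t)) ('C(n, i))%:R)
    & (let d := Num.ceil (2 * dC / (g + 1)) in
       n%:Z < 2 * d -> #|C|%:Z <= Num.floor ((2 * d)%:~R / (2 * d - n%:Z)%:~R : R))].
Proof.
move=> g; have g_gt0 : 0 < g := gamma_gt0 hp hpq hq.
have dC_gt0 : 0 < dC := min_disc_gt0 g_gt0 hdC.
have dist_r := min_disc_hamming g_gt0 hdC.
set r := 2 * dC / (g + 1) in dist_r *.
have r_gt0 : 0 < r by rewrite /r divr_gt0 //; lra.
have [e r_e] : exists e : nat, Num.ceil r = e%:Z.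
  by exists `|Num.ceil r|%N; rewrite gez0_abs // ltW // ceil_gt0.
have e_gt0 : (0 < e)%N by rewrite -ltz_nat -r_e ceil_gt0.
have dist_e x y : x \in C -> y \in C -> x != y -> (e <= hamming x y)%N.
  by move=> xC yC neq_xy; rewrite -lez_nat -r_e ceil_le_int; apply: dist_r.
have le_en : (e <= n)%N.
  case: hdC => [[x [y [xC yC neq_xy _]]] _].
  exact: leq_trans (dist_e x y xC yC neq_xy) (hamming_le x y).
rewrite r_e; split.
- exact: singleton_bound_real.
- move=> t lt_t max_t; apply: (hamming_bound_real R dist_e).
    by apply: max_t; rewrite divr_gt0 //; lra.
  by rewrite -r_e ceil_gt_int intrM /r -mulrA (_ : 2%:~R = 2 :> R) // ltr_pM2l.
- exact: plotkin_bound_int.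
Qed.
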